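(* Let $S$ be a homogroup with $\mathrm{Ker}(S)=\mathrm{Red}(S)$. Then every direct power $\Pi S=\prod_{i\in I}\mathrm{Pr}(S)$ is $\mathcal{L}_{s\text{-}pred}(\Pi S)$-equationally Noetherian.
   Context: A semigroup $S$ is a homogroup if it has a kernel $\mathrm{Ker}(S)$ (minimal two-sided ideal) which is a group. $\mathrm{Red}(S)=\{ab\mid a,b\in S\}$ is the set of reducible elements. $\mathcal{L}_{s\text{-}pred}=\{M\}$ with $M$ ternary; $\mathrm{Pr}(S)$ is the structure on $S$ with $M(x,y,z)\Leftrightarrow xy=z$. The direct power consists of sequences $[a_i\mid i\in I]$ with $M$ holding coordinatewise; $\mathcal{L}_{s\text{-}pred}(\Pi S)$ adds a constant symbol for every element of the power. Equations are atomic formulas ($M(t_1,t_2,t_3)$ or $t_1=t_2$, each $t_k$ a variable or constant); systems are sets of equations in a fixed finite set of variables; the structure is equationally Noetherian in this language if every system is equivalent (same solution set) to a finite subsystem. *)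

From Stdlib Require Import List Fin.

Definition associative_op {S : Type} (op : S -> S -> S) : Prop :=
  forall a b c, op a (op b c) = op (op a b) c.

Definition is_ideal {S : Type} (op : S -> S -> S) (J : S -> Prop) : Prop :=
  (exists x, J x) /\
  (forall s x, J x -> J (op s x)) /\
  (forall s x, J x -> J (op x s)).

Definition is_kernel {S : Type} (op : S -> S -> S) (K : S -> Prop) : Prop :=
  is_ideal op K /\
  forall J, is_ideal op J -> (forall x, J x -> K x) -> forall x, K x -> J x.

Definition is_subgroup_set {S : Type} (op : S -> S -> S) (K : S -> Prop) : Prop :=
  (forall x y, K x -> K y -> K (op x y)) /\
  exists e, K e /\
    (forall x, K x -> op e x = x /\ op x e = x) /\
    (forall x, K x -> exists y, K y /\ op x y = e /\ op y x = e).

Definition homogroup {S : Type} (op : S -> S -> S) : Prop :=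
  associative_op op /\ exists K, is_kernel op K /\ is_subgroup_set op K.

Definition Red {S : Type} (op : S -> S -> S) (x : S) : Prop :=
  exists a b, x = op a b.

(** Direct power  Pi S = prod_{i in I} Pr(S): carrier [I -> S], with the
    ternary predicate M holding coordinatewise. *)
Definition PowM {S I : Type} (op : S -> S -> S) (x y z : I -> S) : Prop :=
  forall i, op (x i) (y i) = z i.

Inductive term (A V : Type) : Type :=
| TVar : V -> term A V
| TConst : A -> term A V.
Arguments TVar {A V} _.
Arguments TConst {A V} _.

Inductive equation (A V : Type) : Type :=
| EqM : term A V -> term A V -> term A V -> equation A V
| EqEq : term A V -> term A V -> equation A V.
Arguments EqM {A V} _ _ _.
Arguments EqEq {A V} _ _.

Definition eval_term {A V : Type} (v : V -> A) (t : term A V) : A :=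
  match t with TVar x => v x | TConst c => c end.

Definition sat_eq {A V : Type} (M : A -> A -> A -> Prop) (v : V -> A)
  (e : equation A V) : Prop :=
  match e with
  | EqM t1 t2 t3 => M (eval_term v t1) (eval_term v t2) (eval_term v t3)
  | EqEq t1 t2 => eval_term v t1 = eval_term v t2
  end.

Definition eq_noetherian {A : Type} (M : A -> A -> A -> Prop) : Prop :=
  forall (n : nat) (Sys : equation A (Fin.t n) -> Prop),
    exists l : list (equation A (Fin.t n)),
      (forall e, In e l -> Sys e) /\
      (forall v : Fin.t n -> A,
         (forall e, Sys e -> sat_eq M v e) <-> (forall e, In e l -> sat_eq M v e)).

(** Since Ker(S) = Red(S) is a group with identity e, every product lies in
    that group, and a |-> a e is a retraction onto it with a b = (a e)(b e).
    Hence a c = b c, a e = b e and c a = c b are all equivalent.  It follows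
    that two equations of the same shape (the same variables in the same
    slots, constants possibly different) which have a common solution in the
    direct power have the same solutions.  In n variables there are finitely
    many shapes, and from each shape class of a system it suffices to keep
    either two equations without common solution or a single one. *)

From Stdlib Require Import List Classical FinFun.
Import ListNotations.

Section ProductsInGroup.

Context {S : Type} {op : S -> S -> S} {e : S}.
Hypothesis assoc : associative_op op.
Hypothesis unit_mul : forall a b, op e (op a b) = op a b /\ op (op a b) e = op a b.
Hypothesis inv_mul : forall a b, exists y, op y (op a b) = e /\ op (op a b) y = e.

Lemma mul_retract a b : op a b = op (op a e) (op b e).
Proof.
  rewrite <- assoc, (proj1 (unit_mul b e)), assoc.
  symmetry; exact (proj2 (unit_mul a b)).
Qed.

Lemma mulr_eq a b c : op a c = op b c <-> op a e = op b e.
Proof.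
  split; [intro H | intro H; rewrite (mul_retract a c), (mul_retract b c), H; reflexivity].
  destruct (inv_mul c e) as [y [_ Hy]].
  assert (Hdiv : forall x, op x e = op (op x c) y).
  { intro x; rewrite (mul_retract x c), <- assoc, Hy.
    symmetry; exact (proj2 (unit_mul x e)). }
  rewrite !Hdiv, H; reflexivity.
Qed.

Lemma mull_eq a b c : op c a = op c b <-> op a e = op b e.
Proof.
  split; [intro H | intro H; rewrite (mul_retract c a), (mul_retract c b), H; reflexivity].
  destruct (inv_mul c e) as [y [Hy _]].
  assert (Hdiv : forall x, op x e = op y (op c x)).
  { intro x; rewrite (mul_retract c x), assoc, Hy.
    symmetry; exact (proj1 (unit_mul x e)). }
  rewrite !Hdiv, H; reflexivity.
Qed.

Lemma mulr_transfer a b c d : op a c = op b c -> op a d = op b d.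
Proof. intro H; apply (mulr_eq a b d), (mulr_eq a b c), H. Qed.

Lemma mull_transfer a b c d : op c a = op c b -> op d a = op d b.
Proof. intro H; apply (mull_eq a b d), (mull_eq a b c), H. Qed.

End ProductsInGroup.

Lemma homogroup_red_products_in_group {S : Type} (op : S -> S -> S) :
  homogroup op -> (forall K, is_kernel op K -> forall x, K x <-> Red op x) ->
  exists e,
    (forall a b, op e (op a b) = op a b /\ op (op a b) e = op a b) /\
    (forall a b, exists y, op y (op a b) = e /\ op (op a b) y = e).
Proof.
  intros [_ [K [HK [_ [e [_ [Hunit Hinv]]]]]]] Hred.
  assert (Kmul : forall a b, K (op a b)).
  { intros a b; apply (Hred K HK); exists a, b; reflexivity. }
  exists e; split.
  - intros a b; exact (Hunit _ (Kmul a b)).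
  - intros a b; destruct (Hinv _ (Kmul a b)) as [y [_ [Hr Hl]]].
    exists y; split; assumption.
Qed.

(** The values [w1], [w2] (under [w]) and [v1], [v2] (under [v]) of one slot
    of two equations of the same shape: the slot holds either the same
    variable in both equations or a constant in each. *)
Definition slot_match {A : Type} (w1 w2 v1 v2 : A) : Prop :=
  (w1 = w2 /\ v1 = v2) \/ (w1 = v1 /\ w2 = v2).

Lemma slot_match_app {A B : Type} (w1 w2 v1 v2 : A -> B) (i : A) :
  slot_match w1 w2 v1 v2 -> slot_match (w1 i) (w2 i) (v1 i) (v2 i).
Proof. intros [[-> ->] | [-> ->]]; [left | right]; split; reflexivity. Qed.

Lemma slot_match_eq {A : Type} (w1 w2 w1' w2' v1 v2 v1' v2' : A) :
  slot_match w1 w1' v1 v1' -> slot_match w2 w2' v2 v2' ->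
  w1 = w2 -> w1' = w2' -> v1 = v2 -> v1' = v2'.
Proof.
  intros [[-> ->] | [-> ->]] [[-> ->] | [-> ->]]; congruence.
Qed.

Lemma slot_match_mul {S : Type} (op : S -> S -> S)
  (RT : forall a b c d, op a c = op b c -> op a d = op b d)
  (LT : forall a b c d, op c a = op c b -> op d a = op d b)
  (w1 w2 w3 w1' w2' w3' v1 v2 v3 v1' v2' v3' : S) :
  slot_match w1 w1' v1 v1' -> slot_match w2 w2' v2 v2' ->
  slot_match w3 w3' v3 v3' ->
  op w1 w2 = w3 -> op w1' w2' = w3' -> op v1 v2 = v3 -> op v1' v2' = v3'.
Proof.
  intros [[-> ->] | [-> ->]] [[-> ->] | [-> ->]] [[-> ->] | [-> ->]] H1 H2 H3;
    subst; try reflexivity; try congruence.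
  (* What is left are cases where two products share a factor in the same
     position, so their equality transfers by cancellation. *)
  all: match goal with
  | H : ?f ?c ?y = ?f ?c ?z |- ?f ?x ?y = ?f ?x ?z => exact (LT _ _ _ _ H)
  | H : ?f ?c ?z = ?f ?c ?y |- ?f ?x ?y = ?f ?x ?z => exact (eq_sym (LT _ _ _ _ H))
  | H : ?f ?y ?c = ?f ?z ?c |- ?f ?y ?x = ?f ?z ?x => exact (RT _ _ _ _ H)
  | H : ?f ?z ?c = ?f ?y ?c |- ?f ?y ?x = ?f ?z ?x => exact (eq_sym (RT _ _ _ _ H))
  end.
Qed.

Definition term_shape {A V : Type} (t : term A V) : term unit V :=
  match t with TVar x => TVar x | TConst _ => TConst tt end.

Definition equation_shape {A V : Type} (e : equation A V) : equation unit V :=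
  match e with
  | EqM t1 t2 t3 => EqM (term_shape t1) (term_shape t2) (term_shape t3)
  | EqEq t1 t2 => EqEq (term_shape t1) (term_shape t2)
  end.

Lemma term_shape_slot_match {A V : Type} (w v : V -> A) (t1 t2 : term A V) :
  term_shape t1 = term_shape t2 ->
  slot_match (eval_term w t1) (eval_term w t2) (eval_term v t1) (eval_term v t2).
Proof.
  destruct t1, t2; simpl; intro H; try discriminate.
  - injection H as ->; left; split; reflexivity.
  - right; split; reflexivity.
Qed.

Lemma Finite_term_shape {V : Type} : Finite V -> Finite (term unit V).
Proof.
  intros [l Hl]; exists (TConst tt :: map TVar l).
  intros [x | []]; [right; apply in_map, Hl | left; reflexivity].
Qed.

Lemma Finite_equation_shape {V : Type} : Finite V -> Finite (equation unit V).
Proof.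
  intros HV; destruct (Finite_term_shape HV) as [l Hl].
  exists (map (fun '(t1, t2, t3) => EqM t1 t2 t3) (list_prod (list_prod l l) l) ++
          map (fun '(t1, t2) => EqEq t1 t2) (list_prod l l)).
  intros [t1 t2 t3 | t1 t2]; apply in_or_app; [left | right].
  - apply (in_map (fun '(t1, t2, t3) => EqM t1 t2 t3) _ (t1, t2, t3)).
    now repeat apply in_prod.
  - apply (in_map (fun '(t1, t2) => EqEq t1 t2) _ (t1, t2)).
    now apply in_prod.
Qed.

Lemma PowM_same_shape {S I V : Type} (op : S -> S -> S)
  (RT : forall a b c d, op a c = op b c -> op a d = op b d)
  (LT : forall a b c d, op c a = op c b -> op d a = op d b)
  (w v : V -> I -> S) (e1 e2 : equation (I -> S) V) :
  equation_shape e1 = equation_shape e2 ->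
  sat_eq (PowM op) w e1 -> sat_eq (PowM op) w e2 ->
  sat_eq (PowM op) v e1 -> sat_eq (PowM op) v e2.
Proof.
  destruct e1 as [a1 a2 a3 | a1 a2], e2 as [b1 b2 b3 | b1 b2]; simpl;
    intro Hshape; try discriminate; injection Hshape.
  - intros E3 E2 E1 Hw1 Hw2 Hv1 i.
    eapply (slot_match_mul op RT LT); [| | | exact (Hw1 i) | exact (Hw2 i) | exact (Hv1 i)].
    all: apply slot_match_app, term_shape_slot_match; assumption.
  - intros E2 E1.
    apply slot_match_eq; apply term_shape_slot_match; assumption.
Qed.

Section FiniteSubsystems.

Context {E Sol : Type} (sat : Sol -> E -> Prop).

Definition finitely_axiomatized (Sys : E -> Prop) : Prop :=
  exists l, (forall e, In e l -> Sys e) /\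
    forall v, (forall e, Sys e -> sat v e) <-> (forall e, In e l -> sat v e).

Lemma finitely_axiomatized_ext (P Q : E -> Prop) :
  (forall e, P e <-> Q e) -> finitely_axiomatized P -> finitely_axiomatized Q.
Proof.
  intros HPQ [l [Hl Hsol]]; exists l; split.
  - intros e He; apply HPQ, Hl, He.
  - intro v; rewrite <- Hsol; split; intros H e He; apply H, HPQ, He.
Qed.

Lemma finitely_axiomatized_union (P Q : E -> Prop) :
  finitely_axiomatized P -> finitely_axiomatized Q ->
  finitely_axiomatized (fun e => P e \/ Q e).
Proof.
  intros [lP [HlP HsolP]] [lQ [HlQ HsolQ]]; exists (lP ++ lQ); split.
  - intros e He; apply in_app_or in He as [He | He]; auto.
  - intro v; split.
    + intros H e He; apply in_app_or in He as [He | He].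
      * apply (HsolP v); auto.
      * apply (HsolQ v); auto.
    + intros H e [He | He].
      * apply (HsolP v); auto; intros e' He'; apply H, in_or_app; auto.
      * apply (HsolQ v); auto; intros e' He'; apply H, in_or_app; auto.
Qed.

Lemma finitely_axiomatized_classes {X : Type} (f : E -> X) (Sys : E -> Prop) :
  Finite X -> (forall x, finitely_axiomatized (fun e => Sys e /\ f e = x)) ->
  finitely_axiomatized Sys.
Proof.
  intros [l Hl] Hclass.
  assert (Hlist : forall l', finitely_axiomatized (fun e => Sys e /\ In (f e) l')).
  { induction l' as [| x l' IH].
    - exists []; split; [intros _ [] | intro v; split; [intros _ _ [] | intros _ _ [_ []]]].
    - apply finitely_axiomatized_ext with
        (fun e => (Sys e /\ f e = x) \/ (Sys e /\ In (f e) l')).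
      + intro e; simpl; intuition congruence.
      + apply finitely_axiomatized_union; auto. }
  apply finitely_axiomatized_ext with (fun e => Sys e /\ In (f e) l).
  - intro e; split; [tauto | split; auto].
  - apply Hlist.
Qed.

Definition coherent (Sys : E -> Prop) : Prop :=
  forall e1 e2 w v, Sys e1 -> Sys e2 ->
    sat w e1 -> sat w e2 -> sat v e1 -> sat v e2.

Lemma coherent_finitely_axiomatized (Sys : E -> Prop) :
  coherent Sys -> finitely_axiomatized Sys.
Proof.
  intro Hcoh.
  destruct (classic (exists e1 e2, Sys e1 /\ Sys e2 /\
                       ~ exists w, sat w e1 /\ sat w e2))
    as [[e1 [e2 [H1 [H2 Hdisj]]]] | Hjoint].
  { exists [e1; e2]; split.
    - intros e [<- | [<- | []]]; assumption.
    - intro v; split.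
      + intros H e [<- | [<- | []]]; auto.
      + intro H; exfalso; apply Hdisj; exists v; split; apply H; simpl; auto. }
  destruct (classic (exists e0, Sys e0)) as [[e0 H0] | Hempty].
  - exists [e0]; split.
    + intros e [<- | []]; assumption.
    + intro v; split.
      * intros H e [<- | []]; auto.
      * intros H e He.
        destruct (classic (exists w, sat w e0 /\ sat w e)) as [[w [Hw0 Hw]] | Hn].
        -- apply (Hcoh e0 e w v); auto; apply H; left; reflexivity.
        -- exfalso; apply Hjoint; exists e0, e; auto.
  - exists []; split; [intros _ [] | intro v; split; [intros _ _ [] |]].
    intros _ e He; exfalso; apply Hempty; exists e; exact He.
Qed.

End FiniteSubsystems.

Theorem theorem5 (S : Type) (op : S -> S -> S)
  (Hhom : homogroup op)
  (Hker : forall K, is_kernel op K -> forall x, K x <-> Red op x)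
  (I : Type) :
  eq_noetherian (@PowM S I op).
Proof.
  destruct (homogroup_red_products_in_group op Hhom Hker) as [e [Hunit Hinv]].
  assert (assoc : associative_op op) by apply Hhom.
  pose proof (mulr_transfer assoc Hunit Hinv) as RT.
  pose proof (mull_transfer assoc Hunit Hinv) as LT.
  intros n Sys.
  apply (finitely_axiomatized_classes (sat_eq (PowM op)) equation_shape).
  - apply Finite_equation_shape, Fin_Finite.
  - intro shape; apply coherent_finitely_axiomatized.
    intros e1 e2 w v [_ Hshape1] [_ Hshape2].
    apply (PowM_same_shape op RT LT); congruence.
Qed.
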